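(* Let $(\Delta,G)$ be a stable admissible pair such that $\Delta$ is mutation-finite. Then the quotient $\Delta/G$ is mutation-finite.
   Context: Here $\Delta$ is identified with a skew-symmetrizable matrix $A=(a_{ij})\in M_{Q_0}(\mathbb Z)$, $Q_0$ finite ($DA$ skew-symmetric for a positive integer diagonal $D$). Mutation $\mu_k(B)=(b'_{ij})$: $b'_{ij}=-b_{ij}$ if $k\in\{i,j\}$, else $b_{ij}+\tfrac12(|b_{ik}|b_{kj}+b_{ik}|b_{kj}|)$; $B$ is mutation-finite if the set $\mathrm{Mut}(B)$ of matrices obtained from $B$ by finite sequences of mutations is finite. A permutation $g$ of $Q_0$ is an automorphism of $B$ if $b_{gi,gj}=b_{ij}$; a group $G$ of automorphisms is admissible ($(B,G)$ an admissible pair) if for distinct $i,j$ in the same orbit there is no path of length $1$ or $2$ from $i$ to $j$ in the quiver of $B$ ($b_{ij}\le0$ and no $k$ with $b_{ik}>0$, $b_{kj}>0$). With $\overline Q_0$ the set of orbits, $A/G\in M_{\overline Q_0}(\mathbb Z)$ has entries $(A/G)_{\mathbf i,\mathbf j}=\sum_{k\in\mathbf i}a_{k,j}$ ($j\in\mathbf j$). Orbit mutation $\mu^G_{\mathbf i}=\prod_{j\in\mathbf i}\mu_j$; $(A,G)$ is stable if for every finite sequence of orbits all pairs $(\mu^G_{\mathbf i_m}\circ\cdots\circ\mu^G_{\mathbf i_1}(A),G)$ are admissible. *)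

From HB Require Import structures.
From mathcomp Require Import all_boot all_order all_algebra all_fingroup.
Set Implicit Arguments.
Unset Strict Implicit.
Unset Printing Implicit Defensive.
Import Order.TTheory GRing.Theory Num.Theory.
Local Open Scope ring_scope.

Definition emx (T : finType) := {ffun T * T -> int}.

Definition skew_symmetrizable (T : finType) (B : emx T) : Prop :=
  exists D : T -> int, (forall i, 0 < D i) /\
    forall i j, D i * B (i, j) = - (D j * B (j, i)).

Definition mutate (T : finType) (k : T) (B : emx T) : emx T :=
  [ffun p : T * T =>
     if (p.1 == k) || (p.2 == k) then - B p
     else B p + ((`|B (p.1, k)| * B (k, p.2) + B (p.1, k) * `|B (k, p.2)|) %/ 2)%Z].

Definition mutate_seq (T : finType) (B : emx T) (s : seq T) : emx T :=
  foldl (fun B' k => mutate k B') B s.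

Definition mutation_finite (T : finType) (B : emx T) : Prop :=
  exists S : seq (emx T), forall s : seq T, mutate_seq B s \in S.

Definition is_automorphism (T : finType) (B : emx T) (g : {perm T}) : Prop :=
  forall i j, B (g i, g j) = B (i, j).

(* (B,G) admissible: G acts by automorphisms and for distinct i, j in the same
   orbit there is no path of length 1 or 2 from i to j. *)
Definition admissible (T : finType) (B : emx T) (G : {group {perm T}}) : Prop :=
  (forall g, g \in G -> is_automorphism B g) /\
  (forall i j, j \in orbit 'P G i -> i != j ->
     B (i, j) <= 0 /\ ~ (exists k, 0 < B (i, k) /\ 0 < B (k, j))).

Definition orbT (T : finType) (G : {group {perm T}}) : finType :=
  {X : {set T} | X \in orbit 'P G @: [set: T]}.

Definition orbit_mutate (T : finType) (G : {group {perm T}}) (I : orbT G)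
  (B : emx T) : emx T := mutate_seq B (enum (val I)).

Definition orbit_mutate_seq (T : finType) (G : {group {perm T}}) (B : emx T)
  (s : seq (orbT G)) : emx T := foldl (fun B' I => orbit_mutate I B') B s.

Definition stable (T : finType) (A : emx T) (G : {group {perm T}}) : Prop :=
  forall s : seq (orbT G), admissible (orbit_mutate_seq A s) G.

Definition quotient_mx (T : finType) (A : emx T) (G : {group {perm T}})
  : emx (orbT G) :=
  [ffun p : orbT G * orbT G =>
     (if [pick j in val p.2] is Some j then \sum_(k in val p.1) A (k, j)
      else 0) : int].

From Pilot Require Import Defs.
From HB Require Import structures.
From mathcomp Require Import all_boot all_order all_algebra all_fingroup.
From mathcomp Require Import ring zify.
Set Implicit Arguments.
Unset Strict Implicit.
Unset Printing Implicit Defensive.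
Import Order.TTheory GRing.Theory Num.Theory.
Local Open Scope ring_scope.

(* For an admissible pair (B, G) with B skew-symmetrizable, mutation commutes
   with the quotient: mu_I (B/G) = (mu^G_I B)/G for every orbit I.  Vertices of
   one orbit are unlinked, so mu^G_I is the simultaneous mutation at I, given by
   an explicit formula.  Admissibility forbids paths k -> j -> k' inside an
   orbit, so each column of B is sign-coherent on every orbit, and on
   sign-coherent families the mutation term (|a| b + a |b|)/2 is additive in
   each argument; this turns the orbit sums of the simultaneous mutation into
   the mutation term of the quotient.  Stability lets the identity be iterated,
   so every mutation of A/G is the quotient of an element of Mut(A). *)

Definition mut_term (a b : int) : int := ((`|a| * b + a * `|b|) %/ 2)%Z.

Lemma mutateE (T : finType) (k : T) (B : emx T) (p : T * T) :
  mutate k B p = if (p.1 == k) || (p.2 == k) then - B p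
                 else B p + mut_term (B (p.1, k)) (B (k, p.2)).
Proof. by rewrite ffunE. Qed.

(* The numerator [|a| b + a |b|] is always even, so the division is exact. *)
Lemma mut_term_mul2 (a b : int) : mut_term a b * 2 = `|a| * b + a * `|b|.
Proof. rewrite /mut_term; nia. Qed.

Lemma mut_termC (a b : int) : mut_term a b = mut_term b a.
Proof. by rewrite /mut_term addrC mulrC [b * _]mulrC. Qed.

Lemma mut_term_ge0 (a b : int) : 0 <= a -> mut_term a b = a * Num.max b 0.
Proof. rewrite /mut_term; nia. Qed.

Lemma mut_term_le0 (a b : int) : a <= 0 -> mut_term a b = - (a * Num.min b 0).
Proof. rewrite /mut_term; nia. Qed.

Lemma mut_term0l (b : int) : mut_term 0 b = 0.
Proof. by rewrite mut_term_ge0 ?mul0r. Qed.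

Lemma mut_term0r (a : int) : mut_term a 0 = 0.
Proof. by rewrite mut_termC mut_term0l. Qed.

Definition sign_coherent (I : finType) (P : pred I) (f : I -> int) : Prop :=
  (forall i, P i -> 0 <= f i) \/ (forall i, P i -> f i <= 0).

Lemma sign_coherent_intro (I : finType) (P : pred I) (f : I -> int) :
  (forall i i', P i -> P i' -> 0 < f i -> f i' < 0 -> False) -> sign_coherent P f.
Proof.
move=> no_opposite; case: (pickP [pred i | P i && (f i < 0)]) => [i' /andP[Pi' neg]|].
  right=> i Pi; rewrite leNgt; apply/negP=> pos; exact: no_opposite Pi Pi' pos neg.
move=> no_neg; left=> i Pi; rewrite leNgt; apply/negP=> neg.
by have := no_neg i; rewrite /= Pi neg.
Qed.

Lemma mut_term_suml (I : finType) (P : pred I) (f : I -> int) (b : int) :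
  sign_coherent P f -> mut_term (\sum_(i | P i) f i) b = \sum_(i | P i) mut_term (f i) b.
Proof.
case=> f_sign.
  rewrite mut_term_ge0 ?sumr_ge0 // mulr_suml.
  by apply: eq_bigr => i Pi; rewrite mut_term_ge0 ?f_sign.
rewrite mut_term_le0 ?sumr_le0 // mulr_suml -sumrN.
by apply: eq_bigr => i Pi; rewrite mut_term_le0 ?f_sign.
Qed.

Lemma mut_term_sumr (I : finType) (P : pred I) (a : int) (f : I -> int) :
  sign_coherent P f -> mut_term a (\sum_(i | P i) f i) = \sum_(i | P i) mut_term a (f i).
Proof.
move=> /mut_term_suml; rewrite mut_termC => ->.
by apply: eq_bigr => i _; rewrite mut_termC.
Qed.

Definition skew_by (T : finType) (D : T -> int) (B : emx T) : Prop :=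
  forall i j, D i * B (i, j) = - (D j * B (j, i)).

Section SkewSymmetrizer.
Variables (T : finType) (D : T -> int) (B : emx T).
Hypotheses (D_gt0 : forall i, 0 < D i) (B_skew : skew_by D B).

Lemma skew_by_ge0 i j : (0 <= B (i, j)) = (B (j, i) <= 0).
Proof.
by rewrite -(pmulr_rge0 _ (D_gt0 i)) B_skew oppr_ge0 (pmulr_rle0 _ (D_gt0 j)).
Qed.

Lemma skew_by_gt0 i j : (0 < B (i, j)) = (B (j, i) < 0).
Proof.
by rewrite -(pmulr_rgt0 _ (D_gt0 i)) B_skew oppr_gt0 (pmulr_rlt0 _ (D_gt0 j)).
Qed.

Lemma skew_by_diag i : B (i, i) = 0.
Proof. by have := B_skew i i; have := D_gt0 i; nia. Qed.

Lemma skew_by_norm i j : D i * `|B (i, j)| = D j * `|B (j, i)|.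
Proof.
by rewrite -[D i]gtr0_norm // -[D j]gtr0_norm // -!normrM B_skew normrN.
Qed.

(* After clearing the division by 2, use D_i |b_ik| = D_k |b_ki| and
   D_k b_kj = - D_j b_jk. *)
Lemma skew_by_mutate k : skew_by D (mutate k B).
Proof.
move=> i j; rewrite !mutateE /= (orbC (j == k)).
case: ifP => _; first by rewrite !mulrN B_skew.
rewrite !mulrDr B_skew opprD; congr (_ + _).
apply: (mulIf (_ : 2 != 0)) => //; rewrite mulNr -!mulrA !mut_term_mul2.
transitivity ((D i * `|B (i, k)|) * B (k, j) + (D i * B (i, k)) * `|B (k, j)|); first ring.
rewrite skew_by_norm B_skew.
transitivity (`|B (k, i)| * (D k * B (k, j)) - B (k, i) * (D k * `|B (k, j)|)); first ring.
rewrite skew_by_norm B_skew; ring.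
Qed.

End SkewSymmetrizer.

Lemma skew_symmetrizable_mutate_seq (T : finType) (B : emx T) (s : seq T) :
  skew_symmetrizable B -> skew_symmetrizable (mutate_seq B s).
Proof.
elim: s B => [|k s IH] B //= [D [D_gt0 B_skew]]; apply: IH.
by exists D; split=> //; apply: skew_by_mutate.
Qed.

Lemma mutate_seq_unlinked (T : finType) (B : emx T) (s : seq T) :
  uniq s -> {in s &, forall i j, B (i, j) = 0} ->
  mutate_seq B s =
  [ffun p : T * T => if (p.1 \in s) || (p.2 \in s) then - B p
     else B p + \sum_(j <- s) mut_term (B (p.1, j)) (B (j, p.2))].
Proof.
elim/last_ind: s => [|s k IH].
  by move=> _ _; apply/ffunP => -[x y]; rewrite ffunE big_nil addr0.
rewrite rcons_uniq => /andP[k_s s_uniq] B0.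
have B0s : {in s &, forall i j, B (i, j) = 0}.
  by move=> i j i_s j_s; apply: B0; rewrite mem_rcons inE ?i_s ?j_s orbT.
have B0k i : i \in s -> B (i, k) = 0 /\ B (k, i) = 0.
  by move=> i_s; split; apply: B0; rewrite mem_rcons inE ?i_s ?eqxx ?orbT.
rewrite /mutate_seq foldl_rcons -/(mutate_seq B s) (IH s_uniq B0s).
set M := [ffun p : T * T => _].
have Mxk x : M (x, k) = B (x, k).
  rewrite ffunE /= (negbTE k_s) orbF; case: ifP => [/B0k[-> _]|_]; first by rewrite oppr0.
  by rewrite big_seq big1 ?addr0 // => j /B0k[-> _]; rewrite mut_term0r.
have Mky y : M (k, y) = B (k, y).
  rewrite ffunE /= (negbTE k_s) /=; case: ifP => [/B0k[_ ->]|_]; first by rewrite oppr0.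
  by rewrite big_seq big1 ?addr0 // => j /B0k[_ ->]; rewrite mut_term0l.
apply/ffunP => -[x y]; rewrite mutateE [RHS]ffunE /= !mem_rcons !inE big_rcons /=.
case: (eqVneq x k) => [->|_] /=; first by rewrite Mky.
case: (eqVneq y k) => [->|_] /=; first by rewrite orbT Mxk.
rewrite Mxk Mky ffunE /=; case: ifP => [/orP[/B0k[-> _]|/B0k[_ ->]]|_].
- by rewrite mut_term0l addr0.
- by rewrite mut_term0r addr0.
by rewrite addrA.
Qed.

Section OrbitClasses.
Variables (T : finType) (G : {group {perm T}}).
Implicit Types (X Y : Defs.orbT G) (i j : T).

Lemma orbTP X : exists x, val X = orbit 'P G x.
Proof. by case/imsetP: (valP X) => x _ ->; exists x. Qed.

Lemma orbT_nonempty X : exists x, x \in val X.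
Proof. by have [x ->] := orbTP X; exists x; apply: orbit_refl. Qed.

Lemma orbT_orbit X i j : i \in val X -> j \in val X -> j \in orbit 'P G i.
Proof.
by have [x ->] := orbTP X => xi xj; apply: orbit_trans xj _; rewrite orbit_sym.
Qed.

Lemma orbT_transitive X i j : i \in val X -> j \in val X -> exists2 g, g \in G & g i = j.
Proof. by move=> Xi Xj; case/orbitP: (orbT_orbit Xi Xj) => g Gg <-; exists g. Qed.

Lemma orbT_closed X g i : g \in G -> i \in val X -> g i \in val X.
Proof.
have [x ->] := orbTP X => Gg xi.
by apply: orbit_trans xi; rewrite -[g i]apermE mem_orbit.
Qed.

Lemma orbT_eq X Y z : z \in val X -> z \in val Y -> X = Y.
Proof.
have [x EX] := orbTP X; have [y EY] := orbTP Y; rewrite EX EY => xz yz.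
by apply: val_inj; rewrite EX EY -(orbit_eqP xz) -(orbit_eqP yz).
Qed.

Lemma orbT_sum_perm (R : nmodType) X g (f : T -> R) :
  g \in G -> \sum_(k in val X) f (g k) = \sum_(k in val X) f k.
Proof.
move=> Gg; rewrite [RHS](reindex_inj (@perm_inj _ g)); apply: eq_bigl => k.
apply/idP/idP => [Xk|]; first exact: orbT_closed.
by move=> /(orbT_closed (groupVr Gg)); rewrite permK.
Qed.

Lemma orbT_pick Y : exists2 y, [pick j in val Y] = Some y & y \in val Y.
Proof.
case: pickP => [y Yy|no_pick]; first by exists y.
by have [y Yy] := orbT_nonempty Y; move: (no_pick y); rewrite /= Yy.
Qed.

Lemma quotient_mx_pickE (B : emx T) X Y y : [pick j in val Y] = Some y ->
  quotient_mx B G (X, Y) = \sum_(k in val X) B (k, y).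
Proof. by move=> pick_y; rewrite ffunE /= pick_y. Qed.

End OrbitClasses.

Section AdmissiblePair.
Variables (T : finType) (G : {group {perm T}}) (B : emx T).
Hypotheses (B_skew : skew_symmetrizable B) (B_adm : admissible B G).
Implicit Types (X Y I : Defs.orbT G).

Lemma admissible_orbit_zero X i j : i \in val X -> j \in val X -> B (i, j) = 0.
Proof.
have [D [D_gt0 DB]] := B_skew.
have [-> _ _|ij Xi Xj] := eqVneq i j; first exact: skew_by_diag DB j.
have [Bij_le0 _] := B_adm.2 i j (orbT_orbit Xi Xj) ij.
rewrite eq_sym in ij; have [Bji_le0 _] := B_adm.2 j i (orbT_orbit Xj Xi) ij.
by apply/eqP; rewrite eq_le Bij_le0 (skew_by_ge0 D_gt0 DB).
Qed.

(* A sign change in a column within an orbit would give a path k -> j -> k'. *)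
Lemma admissible_column_coherent X j : sign_coherent (mem (val X)) (fun k => B (k, j)).
Proof.
have [D [D_gt0 DB]] := B_skew.
apply: sign_coherent_intro => k k' Xk Xk' Bkj_gt0 Bk'j_lt0.
have [kk'|kk'] := eqVneq k k'; first by rewrite kk' ltNge (ltW Bk'j_lt0) in Bkj_gt0.
have [_ no_path] := B_adm.2 k k' (orbT_orbit Xk Xk') kk'.
by apply: no_path; exists j; rewrite (skew_by_gt0 D_gt0 DB j k').
Qed.

Lemma admissible_colsum_eq X Y i j : i \in val Y -> j \in val Y ->
  \sum_(k in val X) B (k, i) = \sum_(k in val X) B (k, j).
Proof.
move=> Yi Yj; have [g Gg <-] := orbT_transitive Yi Yj.
by rewrite -(orbT_sum_perm X (fun k => B (k, g i)) Gg); apply: eq_bigr => k _; rewrite B_adm.1.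
Qed.

Lemma orbit_mutateE I : orbit_mutate I B =
  [ffun p : T * T => if (p.1 \in val I) || (p.2 \in val I) then - B p
     else B p + \sum_(j in val I) mut_term (B (p.1, j)) (B (j, p.2))].
Proof.
rewrite /orbit_mutate mutate_seq_unlinked ?enum_uniq //.
  by apply/ffunP => p; rewrite !ffunE !mem_enum big_enum.
by move=> i j; rewrite !mem_enum; apply: admissible_orbit_zero.
Qed.

Lemma sum_mut_term_orbits X I i y : i \in val I ->
  \sum_(k in val X) \sum_(j in val I) mut_term (B (k, j)) (B (j, y)) =
  mut_term (\sum_(k in val X) B (k, i)) (\sum_(j in val I) B (j, y)).
Proof.
move=> Ii; rewrite exchange_big mut_term_sumr; last exact: admissible_column_coherent.
apply: eq_bigr => j Ij; rewrite -mut_term_suml; last exact: admissible_column_coherent.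
by rewrite (admissible_colsum_eq X Ij Ii).
Qed.

Lemma quotient_mutate I : mutate I (quotient_mx B G) = quotient_mx (orbit_mutate I B) G.
Proof.
apply/ffunP => -[X Y]; have [y pick_y Yy] := orbT_pick Y; have [i pick_i Ii] := orbT_pick I.
rewrite mutateE /= !(quotient_mx_pickE _ _ pick_y) (quotient_mx_pickE _ _ pick_i).
under [RHS]eq_bigr => k _ do rewrite orbit_mutateE ffunE /=.
have [-> | XI] := eqVneq X I; first by rewrite -sumrN; apply: eq_bigr => k ->.
have [YeqI | YI] := eqVneq Y I.
  by rewrite -sumrN; apply: eq_bigr => k _; rewrite -YeqI Yy orbT.
have yI : y \notin val I by apply: contra YI => Iy; rewrite (orbT_eq Yy Iy).
rewrite -(sum_mut_term_orbits X y Ii) -big_split /=; apply: eq_bigr => k Xk.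
have kI : k \notin val I by apply: contra XI => Ik; rewrite (orbT_eq Xk Ik).
by rewrite (negbTE kI) (negbTE yI).
Qed.

End AdmissiblePair.

Section OrbitMutationSequences.
Variables (T : finType) (G : {group {perm T}}).

Lemma orbit_mutate_seq_mutate_seq (B : emx T) (s : seq (Defs.orbT G)) :
  exists t : seq T, orbit_mutate_seq B s = mutate_seq B t.
Proof.
elim: s B => [|I s IH] B /=; first by exists [::].
have [t ->] := IH (orbit_mutate I B); exists (enum (val I) ++ t).
by rewrite /mutate_seq foldl_cat.
Qed.

Lemma quotient_mutate_seq (B : emx T) (s : seq (Defs.orbT G)) :
  skew_symmetrizable B -> stable B G ->
  mutate_seq (quotient_mx B G) s = quotient_mx (orbit_mutate_seq B s) G.
Proof.
elim: s B => [|I s IH] B //= B_skew B_stable.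
rewrite (quotient_mutate B_skew (B_stable [::])) IH //.
  exact: skew_symmetrizable_mutate_seq.
by move=> t; apply: (B_stable (I :: t)).
Qed.

End OrbitMutationSequences.

Theorem mainTheorem17 (T : finType) (A : emx T) (G : {group {perm T}}) :
  skew_symmetrizable A -> admissible A G -> stable A G ->
  mutation_finite A -> mutation_finite (quotient_mx A G).
Proof.
(* Admissibility of A is the empty-sequence case of stability. *)
move=> A_skew _ A_stable [S mut_A_in_S].
exists [seq quotient_mx B G | B <- S] => s.
rewrite quotient_mutate_seq //.
have [t ->] := orbit_mutate_seq_mutate_seq A s.
exact: map_f (mut_A_in_S t).
Qed.
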